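(* Let $X$ and $Y$ be uncertain variables on a common set $\Omega$ with finite ranges. Then $$I_\star(X;Y)\;=\;\sup_{g}\ \mathcal{L}(g\circ X\rightarrow Y)\;\leq\; \mathcal{L}_\star(X\rightarrow Y),$$ where the supremum ranges over all finite sets $\mathcal{U}$ and all functions $g:[\![X]\!]\to\mathcal{U}$ such that $|[\![g\circ X\mid Y(\omega)=y]\!]|=|\{g(x):x\in[\![X\mid Y(\omega)=y]\!]\}|=1$ for every $y\in[\![Y]\!]$.
   Context: Let $\Omega$ be a set. An uncertain variable (uv) is a map $X:\Omega\to\mathbb{X}$ into some set; all uvs considered have finite ranges. The range of $X$ is $[\![X]\!]:=\{X(\omega):\omega\in\Omega\}$; the conditional range is $[\![X\mid Y(\omega)=y]\!]:=\{X(\omega):\omega\in\Omega,\ Y(\omega)=y\}$. Two points $x,x'\in[\![X]\!]$ are overlap connected if there is a finite sequence $y_1,\dots,y_n\in[\![Y]\!]$ with $x\in[\![X\mid Y(\omega)=y_1]\!]$, $x'\in[\![X\mid Y(\omega)=y_n]\!]$ and $[\![X\mid Y(\omega)=y_i]\!]\cap[\![X\mid Y(\omega)=y_{i+1}]\!]\neq\emptyset$ for $i=1,\dots,n-1$. The overlap partition $[\![X\mid Y]\!]_\star$ is the (unique) partition of $[\![X]\!]$ into the equivalence classes of this relation (each class is overlap connected and points in different classes are not overlap connected). The maximin information is $I_\star(X;Y):=\log_2|[\![X\mid Y]\!]_\star|$. The non-stochastic brute-force guessing leakage from a uv $U$ to a uv $Y$ is $$\mathcal{L}(U\rightarrow Y):=\log_2\left(\frac{|[\![U]\!]|}{\min_{y\in[\![Y]\!]}|[\![U\mid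 Y(\omega)=y]\!]|}\right).$$ The maximal non-stochastic brute-force leakage from $X$ to $Y$ is $$\mathcal{L}_\star(X\rightarrow Y):=\sup_{g}\ \mathcal{L}(g\circ X\rightarrow Y),$$ where the supremum ranges over all finite sets $\mathcal{U}$ and all functions $g:[\![X]\!]\to\mathcal{U}$. *)

From HB Require Import structures.
From mathcomp Require Import all_boot all_order all_algebra.
From mathcomp Require Import all_classical all_reals all_analysis.
Set Implicit Arguments. Unset Strict Implicit. Unset Printing Implicit Defensive.
Import Order.TTheory GRing.Theory Num.Theory.

Local Open Scope ring_scope.

(* Uncertain variables: maps X : Omega -> TX into a finite type TX
   (so the range is finite). *)

Definition urange (Omega : Type) (TX : finType) (X : Omega -> TX) : {set TX} :=
  [set x | `[< exists w, X w = x >] ].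

Definition ucond (Omega : Type) (TX TY : finType) (X : Omega -> TX)
  (Y : Omega -> TY) (y : TY) : {set TX} :=
  [set x | `[< exists w, Y w = y /\ X w = x >] ].

Definition overlap_connected (Omega : Type) (TX TY : finType)
  (X : Omega -> TX) (Y : Omega -> TY) (x x' : TX) : Prop :=
  exists (y1 : TY) (s : seq TY),
    all (fun y => y \in urange Y) (y1 :: s) /\
    x \in ucond X Y y1 /\ x' \in ucond X Y (last y1 s) /\
    path (fun a b => ucond X Y a :&: ucond X Y b != finset.set0) y1 s.

Definition overlap_partition (Omega : Type) (TX TY : finType)
  (X : Omega -> TX) (Y : Omega -> TY) : {set {set TX}} :=
  [set [set x' in urange X | `[< overlap_connected X Y x x' >] ]
    | x in urange X].

Definition log2 {R : realType} (r : R) : R := ln r / ln 2.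

Definition maximin_info {R : realType} (Omega : Type) (TX TY : finType)
  (X : Omega -> TX) (Y : Omega -> TY) : R :=
  log2 (#|overlap_partition X Y|%:R).

(* min_{y in [[Y]]} |[[U | Y = y]]|.  The fold starts from |[[U]]|, which is
   >= every |[[U|Y=y]]|, so for nonempty [[Y]] this is exactly the minimum. *)
Definition min_cond_card (Omega : Type) (TU TY : finType)
  (U : Omega -> TU) (Y : Omega -> TY) : nat :=
  \big[minn/#|urange U|]_(y in urange Y) #|ucond U Y y|.

Definition bf_leakage {R : realType} (Omega : Type) (TU TY : finType)
  (U : Omega -> TU) (Y : Omega -> TY) : R :=
  log2 (#|urange U|%:R / (min_cond_card U Y)%:R).

Local Open Scope classical_set_scope.
Local Open Scope ereal_scope.

(* maximal non-stochastic brute-force leakage L_*(X -> Y):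
   sup over all finite sets U and functions g (values of g outside [[X]]
   are irrelevant). *)
Definition max_bf_leakage {R : realType} (Omega : Type) (TX TY : finType)
  (X : Omega -> TX) (Y : Omega -> TY) : \bar R :=
  ereal_sup [set r | exists (TU : finType) (g : TX -> TU),
                       r = (bf_leakage (g \o X) Y)%:E].

From HB Require Import structures.
From mathcomp Require Import all_boot all_order all_algebra.
From mathcomp Require Import all_classical all_reals all_analysis.
Import Order.TTheory GRing.Theory Num.Theory.
Set Implicit Arguments. Unset Strict Implicit. Unset Printing Implicit Defensive.

(* If every conditional range [[g o X | Y = y]] is a singleton, the minimum in
   the brute-force leakage is 1, so L(g o X -> Y) = log2 |[[g o X]]|.  Such a g
   is constant on every conditional range [[X | Y = y]], hence constant along
   overlap chains, hence factors through the overlap class map; therefore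
   |[[g o X]]| <= |[[X | Y]]_*|.  Conversely the overlap class map itself is
   admissible (points of one conditional range share their class) and its
   range is exactly the overlap partition, so the bound is attained and the
   supremum equals I_*(X;Y). *)

Local Open Scope ring_scope.

(* log2 is monotone on natural numbers (with the convention ln 0 = 0). *)
Lemma log2_le_nat (R : realType) (m n : nat) :
  (m <= n)%N -> log2 (m%:R : R) <= log2 (n%:R : R).
Proof.
move=> le_mn; rewrite /log2; apply: ler_wpM2r; first by rewrite invr_ge0 ln_ge0 // ler1n.
case: m le_mn => [|m] le_mn; last first.
  by rewrite ler_ln ?posrE ?ltr0n ?ler_nat // (leq_trans _ le_mn).
rewrite ln0 //; case: n le_mn => [|n] _; first by rewrite ln0.
by rewrite ln_ge0 // ler1n.
Qed.

Lemma card_imset_coarser (T T1 T2 : finType) (A : {set T})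
    (f : T -> T1) (h : T -> T2) :
  {in A &, forall a b, h a = h b -> f a = f b} -> (#|f @: A| <= #|h @: A|)%N.
Proof.
move=> fh; pose F z := omap f [pick a in A | h a == z].
rewrite -(card_imset _ (@Some_inj _)).
apply: leq_trans (leq_imset_card F _); apply: subset_leq_card.
apply/fintype.subsetP => _ /imsetP [_ /imsetP [a Aa ->] ->].
apply/imsetP; exists (h a); first exact: imset_f.
rewrite /F; case: pickP => [b /andP [Ab /eqP hba] | /(_ a)]; last by rewrite Aa eqxx.
by rewrite (fh a b).
Qed.

Section Ranges.
Variables (Omega : Type) (TY : finType) (Y : Omega -> TY).

Lemma in_urange (T : finType) (U : Omega -> T) x :
  (x \in urange U) <-> exists w, U w = x.
Proof. by rewrite inE; split => /asboolP. Qed.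

Lemma in_ucond (T : finType) (U : Omega -> T) y x :
  (x \in ucond U Y y) <-> exists w, Y w = y /\ U w = x.
Proof. by rewrite inE; split => /asboolP. Qed.

Lemma urange_comp (T T' : finType) (U : Omega -> T) (f : T -> T') :
  urange (f \o U) = f @: urange U.
Proof.
apply/setP => z; apply/idP/imsetP => [/in_urange [w <-] | [x /in_urange [w <-] ->]].
  by exists (U w) => //; apply/in_urange; exists w.
by apply/in_urange; exists w.
Qed.

Lemma ucond_urange (T : finType) (U : Omega -> T) y x :
  x \in ucond U Y y -> y \in urange Y.
Proof. by move=> /in_ucond [w [<- _]]; apply/in_urange; exists w. Qed.

End Ranges.

Section OverlapClasses.
Variables (Omega : Type) (TX TY : finType) (X : Omega -> TX) (Y : Omega -> TY).

Local Notation oc := (overlap_connected X Y).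

Definition overlap_class (x : TX) : {set TX} :=
  [set x' in urange X | `[< oc x x' >] ].

Lemma overlap_partitionE : overlap_partition X Y = overlap_class @: urange X.
Proof. by []. Qed.

Lemma oc_refl x : x \in urange X -> oc x x.
Proof.
move=> /in_urange [w <-].
have Xw : X w \in ucond X Y (Y w) by apply/in_ucond; exists w.
by exists (Y w), [::]; rewrite /= (ucond_urange Xw).
Qed.

Lemma oc_cons y a b z :
  a \in ucond X Y y -> b \in ucond X Y y -> oc a z -> oc b z.
Proof.
move=> ya yb [y1 [s [all_s [a1 [zs path_s]]]]].
have meet : ucond X Y y :&: ucond X Y y1 != finset.set0.
  by apply/set0Pn; exists a; rewrite inE ya a1.
exists y, (y1 :: s); split; last by rewrite /= meet.
by rewrite /= (ucond_urange ya).
Qed.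

Lemma mem_overlap_class x : x \in urange X -> x \in overlap_class x.
Proof. by move=> Xx; rewrite inE Xx; apply/asboolP/oc_refl. Qed.

Lemma overlap_class_ucond y a b :
  a \in ucond X Y y -> b \in ucond X Y y -> overlap_class a = overlap_class b.
Proof.
move=> ya yb; apply/setP => z; rewrite !inE; congr (_ && _).
by apply/asboolP/asboolP; [apply: oc_cons ya yb | apply: oc_cons yb ya].
Qed.

Lemma overlap_class_ucond1 y :
  y \in urange Y -> #|ucond (overlap_class \o X) Y y| = 1%N.
Proof.
move=> /in_urange [w0 Yw0]; apply/eqP/cards1P; exists (overlap_class (X w0)).
apply/setP => z; rewrite inE; apply/idP/eqP => [/in_ucond [w [Yw <-]] | ->].
  by apply: (overlap_class_ucond (y := y)); apply/in_ucond; [exists w | exists w0].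
by apply/in_ucond; exists w0.
Qed.

Lemma urange_overlap_class : urange (overlap_class \o X) = overlap_partition X Y.
Proof. by rewrite urange_comp overlap_partitionE. Qed.

Section ConstantOnConditionalRanges.
Variables (T : finType) (f : TX -> T).
Hypothesis f_cond : forall y a b, a \in ucond X Y y -> b \in ucond X Y y -> f a = f b.

Lemma oc_const a b : oc a b -> f a = f b.
Proof.
move=> [y1 [s [_ [a1 [bs path_s]]]]].
elim: s y1 a a1 bs path_s => [|y2 s IH] y1 a a1 bs /=; first by move=> _; apply: f_cond a1 bs.
move=> /andP [/set0Pn [z]]; rewrite inE => /andP [z1 z2] path_s.
by rewrite (f_cond a1 z1); apply: IH z2 bs path_s.
Qed.

Lemma card_urange_le_partition : (#|urange (f \o X)| <= #|overlap_partition X Y|)%N.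
Proof.
rewrite urange_comp overlap_partitionE; apply: card_imset_coarser => a b Xa Xb eq_ab.
have : b \in overlap_class a by rewrite eq_ab mem_overlap_class.
by rewrite inE => /andP [_ /asboolP /oc_const].
Qed.

End ConstantOnConditionalRanges.

Lemma ucond1_const (TU : finType) (g : TX -> TU) :
  (forall y, y \in urange Y -> #|ucond (g \o X) Y y| = 1%N) ->
  forall y a b, a \in ucond X Y y -> b \in ucond X Y y -> g a = g b.
Proof.
move=> g1 y a b ya yb; have /eqP/cards1P [u gXy] := g1 y (ucond_urange ya).
have gXy_mem c : c \in ucond X Y y -> g c \in ucond (g \o X) Y y.
  by move=> /in_ucond [w [Yw <-]]; apply/in_ucond; exists w.
by move: (gXy_mem a ya) (gXy_mem b yb); rewrite gXy !inE => /eqP -> /eqP ->.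
Qed.

End OverlapClasses.

Section DeterminedLeakage.
Variables (R : realType) (Omega : Type) (TU TY : finType).
Variables (U : Omega -> TU) (Y : Omega -> TY).
Hypothesis U1 : forall y, y \in urange Y -> #|ucond U Y y| = 1%N.

Lemma min_cond_card1 (w : Omega) : min_cond_card U Y = 1%N.
Proof.
have U_gt0 : (0 < #|urange U|)%N.
  by apply/card_gt0P; exists (U w); apply/in_urange; exists w.
have Y_gt0 : (0 < #|urange Y|)%N.
  by apply/card_gt0P; exists (Y w); apply/in_urange; exists w.
rewrite /min_cond_card (eq_bigr (fun=> 1%N)) // big_const.
case: #|urange Y| Y_gt0 => // k _ /=; apply/minn_idPl.
by elim: k => [|k IH] //=; rewrite leq_min IH.
Qed.

Lemma bf_leakage_determined : bf_leakage U Y = log2 (#|urange U|%:R : R).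
Proof.
rewrite /bf_leakage; case: (pselect (exists w : Omega, True)) => [[w _] | noW].
  by rewrite (min_cond_card1 w) divr1.
suff -> : urange U = finset.set0 by rewrite cards0 mul0r.
by apply/setP => u; rewrite [RHS]inE; apply/negP => /in_urange [w _]; apply: noW; exists w.
Qed.

End DeterminedLeakage.

Local Open Scope classical_set_scope.
Local Open Scope ereal_scope.

Theorem proposition5 (R : realType) (Omega : Type) (TX TY : finType)
  (X : Omega -> TX) (Y : Omega -> TY) :
  let S := [set r : \bar R | exists (TU : finType) (g : TX -> TU),
              (forall y, y \in urange Y -> #|ucond (g \o X) Y y| = 1%N) /\
              r = (bf_leakage (g \o X) Y)%:E] in
  (maximin_info X Y : R)%:E = ereal_sup S /\
  ereal_sup S <= max_bf_leakage X Y.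
Proof.
move=> S; split; last first.
  by apply: ereal_sup_le => _ [TU [g [_ ->]]]; exists TU, g.
apply/eqP; rewrite eq_le; apply/andP; split.
  have class1 := @overlap_class_ucond1 _ _ _ X Y.
  apply: ereal_sup_ubound; exists {set TX}, (overlap_class X Y); split => //.
  rewrite bf_leakage_determined; last exact: class1.
  by rewrite urange_overlap_class.
apply: ge_ereal_sup => _ [TU [g [g1 ->]]].
rewrite lee_fin bf_leakage_determined; last exact: g1.
exact/log2_le_nat/card_urange_le_partition/ucond1_const.
Qed.
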